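(* Let $0\le\beta<1$ and let $f=h+\overline{g}\in\widetilde{\mathcal{G}}^{0}_{\mathcal{H}}(\beta)$ with $h(z)=z+\sum_{n=2}^\infty a_nz^n$, $g(z)=\sum_{n=2}^\infty b_nz^n$. Then $|a_n|+|b_n|\le 2(1-\beta)$ for all $n\ge2$, and for all $z\in\mathbb{D}$, $$\beta|z|+(1-\beta)\frac{1-|z|}{1+|z|}|z|\le |f(z)|\le \beta|z|+(1-\beta)\frac{1+|z|}{1-|z|}|z|.$$ Both growth inequalities are sharp: for $f(z)=z+\sum_{n=2}^\infty 2(1-\beta)z^n$ (which lies in $\widetilde{\mathcal{G}}^{0}_{\mathcal{H}}(\beta)$), equality holds on the right at $z=r$ and on the left at $z=-r$, $0\le r<1$.
   Context: $\mathbb{D}=\{z\in\mathbb{C}:|z|<1\}$. $\mathcal{H}_0$ denotes the class of harmonic functions $f=h+\overline{g}$ on $\mathbb{D}$, where $h,g$ are analytic in $\mathbb{D}$ of the form $h(z)=z+\sum_{n=2}^\infty a_nz^n$ and $g(z)=\sum_{n=2}^\infty b_nz^n$. For $0\le\beta<1$, $\widetilde{\mathcal{G}}^{0}_{\mathcal{H}}(\beta)$ is the set of $f=h+\overline{g}\in\mathcal{H}_0$ such that $\operatorname{Re}\big(h(z)/z\big)-\beta>|g(z)/z|$ for all $z\in\mathbb{D}$ (with $h(z)/z$ and $g(z)/z$ extended analytically to $z=0$). *)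

From Stdlib Require Import Reals.
From Coquelicot Require Import Coquelicot.

Definition in_disk (z : C) : Prop := (Cmod z < 1)%R.

(* Class H_0: f = h + conj g with h(z) = z + sum_{n>=2} a_n z^n and
   g(z) = sum_{n>=2} b_n z^n analytic in D.  h, g are given by their Taylor
   coefficient sequences a, b (a_0 = 0, a_1 = 1, b_0 = b_1 = 0), the power
   series converging on D to h, g respectively. *)
Definition in_H0 (a b : nat -> C) (h g : C -> C) : Prop :=
  a 0%nat = 0%C /\ a 1%nat = 1%C /\ b 0%nat = 0%C /\ b 1%nat = 0%C /\
  (forall z : C, in_disk z -> is_pseries a z (h z) /\ is_pseries b z (g z)).

Definition harm (h g : C -> C) (z : C) : C := (h z + Cconj (g z))%C.

(* Class G~^0_H(beta): Re(h(z)/z) - beta > |g(z)/z| on D, where h(z)/z and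
   g(z)/z are extended analytically to z = 0 by their values a_1 and b_1. *)
Definition in_G0H (beta : R) (a b : nat -> C) (h g : C -> C) : Prop :=
  in_H0 a b h g /\
  (Re (a 1%nat) - beta > Cmod (b 1%nat))%R /\
  (forall z : C, in_disk z -> z <> 0%C ->
     (Re (h z / z)%C - beta > Cmod (g z / z)%C)%R).

(* The extremal function f(z) = z + sum_{n>=2} 2(1-beta) z^n
   = z + 2(1-beta) z^2/(1-z), with g = 0. *)
Definition ext_a (beta : R) (n : nat) : C :=
  match n with
  | 0%nat => 0%C
  | 1%nat => 1%C
  | _ => RtoC (2 * (1 - beta))%R
  end.
Definition ext_b (n : nat) : C := 0%C.
Definition ext_h (beta : R) (z : C) : C :=
  (z + RtoC (2 * (1 - beta))%R * (z * z) / (1 - z))%C.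
Definition ext_g (z : C) : C := 0%C.

(* For f = h + conj g in the class and any unimodular eps, the function
     p_eps(z) = (h(z)/z + eps g(z)/z - beta) / (1 - beta)
   satisfies p_eps(0) = 1 and Re p_eps > 0 on the disk (because
   Re(eps g/z) >= -|g/z|): it lies in the Caratheodory class.  The theorem then
   follows from three classical facts about a power series p = sum c_k z^k with
   c_0 = 1 and Re p >= 0 on the disk,
     |c_k| <= 2,   Re p(z) >= (1-|z|)/(1+|z|),   |p(z)| <= (1+|z|)/(1-|z|),
   applied with eps chosen to align eps b_n with a_n (coefficient bound), to make
   eps g(z)/z = -|g(z)/z| (lower growth bound), or to align eps g(z)/z with
   h(z)/z (upper growth bound).

   The Caratheodory facts are proved without integration, by a discrete Herglotz
   argument.  Averaging Re p against a trigonometric polynomial T with Re T >= 0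
   over the 2K-th roots of unity on the circle |z| = rho, with p truncated after
   K terms, and letting K -> oo gives the positivity lemma
     Re(sum_k c_k rho^k t_k + conj(c_0) t_0) >= 0.
   The choice T = 1 + s e^{-ikx} yields the coefficient bound; choosing for T a
   truncation of the Herglotz kernel (1 + y)/(1 - y), |y| = |z|/rho, yields the
   growth bounds once rho -> 1. *)

From Stdlib Require Import Reals Lra Lia Psatz.
From Coquelicot Require Import Coquelicot.

Open Scope C_scope.

(* Averages over the N-th roots of unity
   have exactly N terms, which is why this convention is preferred here to
   Coquelicot's [sum_n] (n + 1 terms); [sum_n_csum] relates the two. *)
Fixpoint csum (f : nat -> C) (n : nat) : C :=
  match n with O => 0 | S n => csum f n + f n end.

Lemma csum_ext (f g : nat -> C) n :
  (forall k, (k < n)%nat -> f k = g k) -> csum f n = csum g n.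
Proof. induction n; simpl; intros H; auto. rewrite IHn, H; auto. Qed.

Lemma csum_plus (f g : nat -> C) n :
  csum (fun k => f k + g k) n = csum f n + csum g n.
Proof. induction n; simpl; [ring | rewrite IHn; ring]. Qed.

Lemma csum_scal_l (a : C) (f : nat -> C) n :
  csum (fun k => a * f k) n = a * csum f n.
Proof. induction n; simpl; [ring | rewrite IHn; ring]. Qed.

Lemma csum_scal_r (a : C) (f : nat -> C) n :
  csum (fun k => f k * a) n = csum f n * a.
Proof. induction n; simpl; [ring | rewrite IHn; ring]. Qed.

Lemma csum_zero (f : nat -> C) n :
  (forall k, (k < n)%nat -> f k = 0) -> csum f n = 0.
Proof. induction n; simpl; intros H; auto. rewrite IHn, H by auto; ring. Qed.

Lemma csum_extend (f : nat -> C) M K :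
  (M <= K)%nat -> (forall k, (M <= k < K)%nat -> f k = 0) -> csum f K = csum f M.
Proof.
  intros HMK H. induction K as [|K IH]; [now replace M with 0%nat by lia|].
  destruct (Nat.eq_dec M (S K)) as [->|HM]; [reflexivity|].
  cbn [csum]. rewrite IH, H by (try lia; intros; apply H; lia). ring.
Qed.

Lemma csum_mult (f g : nat -> C) n m :
  csum f n * csum g m = csum (fun i => csum (fun k => f i * g k) m) n.
Proof. induction n; simpl; [ring | rewrite <- IHn, csum_scal_l; ring]. Qed.

Lemma csum_swap (u : nat -> nat -> C) n m :
  csum (fun i => csum (u i) m) n = csum (fun j => csum (fun i => u i j) n) m.
Proof.
  revert m. induction n; intros m; simpl.
  - symmetry; apply csum_zero; auto.
  - rewrite IHn, <- csum_plus. reflexivity.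
Qed.

Lemma csum_delta (v : nat -> C) a n :
  csum (fun k => if Nat.eqb k a then v k else 0) n = if Nat.ltb a n then v a else 0.
Proof.
  induction n; simpl; auto. rewrite IHn.
  destruct (Nat.eqb_spec n a), (Nat.ltb_spec a n), (Nat.ltb_spec a (S n));
    subst; try lia; ring.
Qed.

Lemma csum_conj (f : nat -> C) n : Cconj (csum f n) = csum (fun k => Cconj (f k)) n.
Proof.
  induction n; simpl.
  - apply injective_projections; simpl; [reflexivity | apply Ropp_0].
  - rewrite Cplus_conj, IHn; auto.
Qed.

Lemma csum_Re_ge (f : nat -> C) n x :
  (forall k, (k < n)%nat -> x <= Re (f k))%R -> (INR n * x <= Re (csum f n))%R.
Proof.
  induction n; cbn [csum]; intros H; [simpl; lra|].
  assert (A := IHn (fun k Hk => H k ltac:(lia))). assert (B := H n ltac:(lia)).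
  change (Re (csum f n + f n)) with (Re (csum f n) + Re (f n))%R.
  rewrite S_INR. lra.
Qed.

Lemma csum_geom (w : C) n : csum (fun k => w ^ k) n * (1 - w) = 1 - w ^ n.
Proof. induction n; simpl; [ring | rewrite Cmult_plus_distr_r, IHn; ring]. Qed.

Lemma sum_n_csum (f : nat -> C) n : sum_n f n = csum f (S n).
Proof.
  induction n.
  - rewrite sum_O. apply injective_projections; simpl; ring.
  - rewrite sum_Sn, IHn. reflexivity.
Qed.

Fixpoint rsum (f : nat -> R) (n : nat) : R :=
  match n with O => 0%R | S n => (rsum f n + f n)%R end.

Lemma Cmod_csum (f : nat -> C) n : (Cmod (csum f n) <= rsum (fun k => Cmod (f k)) n)%R.
Proof.
  induction n; simpl; [rewrite Cmod_0; lra|].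
  eapply Rle_trans; [apply Cmod_triangle | lra].
Qed.

Lemma rsum_le f g n : (forall k, (k < n)%nat -> f k <= g k)%R -> (rsum f n <= rsum g n)%R.
Proof.
  induction n; simpl; intros H; [lra|].
  assert (A := IHn (fun k Hk => H k ltac:(lia))). assert (B := H n ltac:(lia)). lra.
Qed.

Lemma rsum_nonneg f n : (forall i, 0 <= f i)%R -> (0 <= rsum f n)%R.
Proof. intros H; induction n; simpl; [lra | specialize (H n); lra]. Qed.

Lemma rsum_ge_term f n k : (forall i, 0 <= f i)%R -> (k < n)%nat -> (f k <= rsum f n)%R.
Proof.
  intros H. induction n; intros Hk; [lia|]. simpl.
  destruct (Nat.eq_dec k n) as [->|Hkn].
  - assert (0 <= rsum f n)%R by (apply rsum_nonneg; auto). lra.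
  - assert (f k <= rsum f n)%R by (apply IHn; lia). specialize (H n). lra.
Qed.

Definition cis (t : R) : C := (cos t, sin t).

Lemma cis_add a b : cis a * cis b = cis (a + b).
Proof.
  unfold cis, Cmult; simpl. rewrite cos_plus, sin_plus.
  apply injective_projections; simpl; ring.
Qed.

Lemma cis_pow a n : cis a ^ n = cis (INR n * a).
Proof.
  induction n.
  - unfold cis. simpl. rewrite Rmult_0_l, cos_0, sin_0. reflexivity.
  - rewrite Cpow_S, IHn, cis_add, S_INR. f_equal. ring.
Qed.

Lemma cis_conj a : Cconj (cis a) = cis (- a).
Proof. unfold cis, Cconj; simpl. rewrite cos_neg, sin_neg. reflexivity. Qed.

Lemma cis_0 : cis 0 = 1.
Proof. unfold cis. rewrite cos_0, sin_0. reflexivity. Qed.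

Lemma Cmod_cis a : Cmod (cis a) = 1%R.
Proof.
  unfold Cmod, cis; simpl. pose proof (sin2_cos2 a) as H. unfold Rsqr in H.
  replace (cos a * (cos a * 1) + sin a * (sin a * 1))%R with 1%R by lra.
  apply sqrt_1.
Qed.

Lemma cis_2pi_mult n : cis (2 * PI * INR n) = 1.
Proof.
  unfold cis. replace (2 * PI * INR n)%R with (0 + 2 * INR n * PI)%R by ring.
  rewrite cos_period, sin_period, cos_0, sin_0. reflexivity.
Qed.

Lemma cis_neq_1 t : (0 < Rabs t < 2 * PI)%R -> cis t <> 1.
Proof.
  assert (Hpos : forall u, (0 < u < 2 * PI)%R -> cis u <> 1).
  { intros u Hu E. assert (Hc : cos u = 1%R) by (injection E; auto).
    replace u with (2 * (u / 2))%R in Hc by field. rewrite cos_2a_sin in Hc.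
    assert (0 < sin (u / 2))%R by (apply sin_gt_0; lra). nra. }
  intros Ht. destruct (Rle_or_lt 0 t).
  - rewrite Rabs_pos_eq in Ht by lra. apply Hpos; lra.
  - rewrite Rabs_left in Ht by lra. intros E. apply (Hpos (- t)%R); [lra|].
    rewrite <- cis_conj, E. apply injective_projections; simpl; [reflexivity | apply Ropp_0].
Qed.

Lemma root_of_unity_geom_sum (w : C) N : w ^ N = 1 -> w <> 1 -> csum (fun j => w ^ j) N = 0.
Proof.
  intros HN Hw. assert (G := csum_geom w N).
  replace (1 - w ^ N) with (RtoC 0) in G by (rewrite HN; ring).
  destruct (Ceq_dec (csum (fun j => w ^ j) N) 0) as [Z|Z]; auto.
  exfalso. apply (Cmult_neq_0 _ _ Z (Cminus_eq_contra 1 w (not_eq_sym Hw))). exact G.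
Qed.

Lemma roots_of_unity_orthogonality N a b : (a < N)%nat -> (b < N)%nat ->
  csum (fun j => cis (INR j * (2 * PI * (INR a - INR b) / INR N))) N =
  if Nat.eqb a b then RtoC (INR N) else 0.
Proof.
  intros Ha Hb. assert (HN : (0 < INR N)%R) by (apply lt_0_INR; lia).
  set (t := (2 * PI * (INR a - INR b) / INR N)%R).
  rewrite (csum_ext _ (fun j => cis t ^ j)) by (intros; rewrite cis_pow; reflexivity).
  destruct (Nat.eqb_spec a b) as [<-|Hab].
  - replace t with 0%R by (unfold t; field; lra). rewrite cis_0.
    clear. induction N; cbn [csum]; [reflexivity|].
    rewrite IHN, Cpow_1_l, S_INR. apply injective_projections; simpl; ring.
  - apply root_of_unity_geom_sum.
    + rewrite cis_pow. unfold t.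
      replace (INR N * (2 * PI * (INR a - INR b) / INR N))%R
        with (2 * PI * INR a + - (2 * PI * INR b))%R by (field; lra).
      rewrite <- cis_add, <- cis_conj, !cis_2pi_mult.
      apply injective_projections; simpl; ring.
    + apply cis_neq_1. pose proof PI_RGT_0.
      assert (INR a <> INR b) by (intro E; apply INR_eq in E; auto).
      assert (Rabs (INR a - INR b) < INR N)%R.
      { apply lt_INR in Ha, Hb. pose proof (pos_INR a). pose proof (pos_INR b).
        apply Rabs_def1; lra. }
      assert (0 < Rabs (INR a - INR b))%R by (apply Rabs_pos_lt; lra).
      unfold t, Rdiv. rewrite !Rabs_mult, Rabs_inv, (Rabs_pos_eq (INR N)),
        (Rabs_pos_eq 2), (Rabs_pos_eq PI) by lra.
      split.
      * apply Rmult_lt_0_compat; [nra | apply Rinv_0_lt_compat; lra].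
      * apply (Rmult_lt_reg_r (INR N)); auto.
        rewrite Rmult_assoc, Rinv_l, Rmult_1_r by lra. nra.
Qed.

Definition psum (c : nat -> C) (n : nat) (z : C) : C := csum (fun k => c k * z ^ k) n.

Lemma psum_S (c : nat -> C) (n : nat) (z : C) : psum c (S n) z = psum c n z + c n * z ^ n.
Proof. reflexivity. Qed.

Definition trig (t : nat -> C) (M : nat) (x : R) : C := csum (fun k => t k * cis (- (INR k * x))) M.

Definition angle (N j : nat) : R := (2 * PI * INR j / INR N)%R.
Definition sample (rho : R) (N j : nat) : C := RtoC rho * cis (angle N j).

Lemma sample_pow (rho : R) (N j m : nat) : sample rho N j ^ m = RtoC (rho ^ m) * cis (INR m * angle N j).
Proof. unfold sample. rewrite Cpow_mult_l, cis_pow, RtoC_pow. reflexivity. Qed.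

Lemma sample_conj_pow (rho : R) (N j m : nat) :
  Cconj (sample rho N j) ^ m = RtoC (rho ^ m) * cis (- (INR m * angle N j)).
Proof.
  unfold sample. rewrite Cmult_conj, cis_conj, Cpow_mult_l, cis_pow, RtoC_pow.
  replace (Cconj (RtoC rho)) with (RtoC rho) by (apply injective_projections; simpl; ring).
  repeat f_equal. ring.
Qed.

Lemma Cmod_sample (rho : R) (N j : nat) : (0 <= rho)%R -> Cmod (sample rho N j) = rho.
Proof. intros. unfold sample. rewrite Cmod_mult, Cmod_R, Cmod_cis, Rabs_pos_eq; lra. Qed.

Lemma average_psum_trig (c t : nat -> C) (rho : R) (N K : nat) : (0 < N)%nat -> (K <= N)%nat ->
  csum (fun j => psum c K (sample rho N j) * trig t K (angle N j)) N =
  RtoC (INR N) * csum (fun k => c k * RtoC (rho ^ k) * t k) K.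
Proof.
  intros HN HK. assert (HN' : (0 < INR N)%R) by (apply lt_0_INR; lia).
  unfold psum, trig.
  rewrite (csum_ext _ (fun j => csum (fun m => csum (fun k => (c m * RtoC (rho ^ m) * t k) *
     cis (INR j * (2 * PI * (INR m - INR k) / INR N))) K) K)).
  2:{ intros j Hj. rewrite csum_mult. apply csum_ext; intros m Hm. apply csum_ext; intros k Hk.
      rewrite sample_pow.
      replace (INR j * (2 * PI * (INR m - INR k) / INR N))%R
        with (INR m * angle N j + - (INR k * angle N j))%R by (unfold angle; field; lra).
      rewrite <- cis_add. ring. }
  rewrite csum_swap, (csum_ext _ (fun m => c m * RtoC (rho ^ m) * t m * RtoC (INR N))).
  2:{ intros m Hm. rewrite csum_swap.
      rewrite (csum_ext _ (fun k => if Nat.eqb k m then c m * RtoC (rho ^ m) * t m * RtoC (INR N) else 0)).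
      - rewrite csum_delta. destruct (Nat.ltb_spec m K); [reflexivity | lia].
      - intros k Hk. rewrite csum_scal_l, roots_of_unity_orthogonality by lia.
        destruct (Nat.eqb_spec m k), (Nat.eqb_spec k m); subst; try lia; ring. }
  rewrite csum_scal_r. ring.
Qed.

(* For N >= 2K the conjugate partial sum only meets T in the constant term. *)
Lemma average_conj_psum_trig (c t : nat -> C) (rho : R) (N K : nat) : (0 < K)%nat -> (2 * K <= N)%nat ->
  csum (fun j => Cconj (psum c K (sample rho N j)) * trig t K (angle N j)) N =
  RtoC (INR N) * (Cconj (c 0%nat) * t 0%nat).
Proof.
  intros HK HKN. assert (HN' : (0 < INR N)%R) by (apply lt_0_INR; lia).
  unfold psum, trig.
  rewrite (csum_ext _ (fun j => csum (fun m => csum (fun k => (Cconj (c m) * RtoC (rho ^ m) * t k) *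
     cis (INR j * (2 * PI * (INR 0 - INR (m + k)) / INR N))) K) K)).
  2:{ intros j Hj. rewrite csum_conj, csum_mult. apply csum_ext; intros m Hm.
      apply csum_ext; intros k Hk.
      rewrite Cmult_conj, Cpow_conj, sample_conj_pow.
      replace (INR j * (2 * PI * (INR 0 - INR (m + k)) / INR N))%R
        with (- (INR m * angle N j) + - (INR k * angle N j))%R
        by (unfold angle; rewrite plus_INR; simpl; field; lra).
      rewrite <- cis_add. ring. }
  rewrite csum_swap.
  rewrite (csum_ext _ (fun m => if Nat.eqb m 0 then Cconj (c 0%nat) * t 0%nat * RtoC (INR N) else 0)).
  2:{ intros m Hm. rewrite csum_swap.
      rewrite (csum_ext _ (fun k => if Nat.eqb k 0
        then (if Nat.eqb m 0 then Cconj (c 0%nat) * t 0%nat * RtoC (INR N) else 0) else 0)).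
      - rewrite csum_delta. destruct (Nat.ltb_spec 0 K); [reflexivity | lia].
      - intros k Hk. rewrite csum_scal_l, roots_of_unity_orthogonality by lia.
        destruct (Nat.eqb_spec 0 (m + k)), (Nat.eqb_spec k 0), (Nat.eqb_spec m 0);
          subst; try lia; simpl; ring. }
  rewrite csum_delta. destruct (Nat.ltb_spec 0 K); [ring | lia].
Qed.

Lemma pow_small q eps : (0 <= q < 1)%R -> (0 < eps)%R ->
  exists N, forall n, (N <= n)%nat -> (q ^ n < eps)%R.
Proof.
  intros Hq He. destruct (pow_lt_1_zero q ltac:(rewrite Rabs_pos_eq; lra) eps He) as [N HN].
  exists N. intros n Hn. specialize (HN n Hn). rewrite Rabs_pos_eq in HN; auto.
  apply pow_le; lra.
Qed.

Lemma nonneg_of_geometric_lower_bound (x D q : R) M : (0 <= q < 1)%R -> (0 <= D)%R ->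
  (forall K, (M <= K)%nat -> - (D * q ^ K) <= x)%R -> (0 <= x)%R.
Proof.
  intros Hq HD H. apply Rle_plus_epsilon. intros eps He.
  destruct (pow_small q (eps / (D + 1)) Hq ltac:(apply Rdiv_lt_0_compat; lra)) as [N HN].
  specialize (H (M + N)%nat ltac:(lia)). specialize (HN (M + N)%nat ltac:(lia)).
  assert (0 <= q ^ (M + N))%R by (apply pow_le; lra).
  assert (D * q ^ (M + N) <= (D + 1) * (eps / (D + 1)))%R by (apply Rmult_le_compat; lra).
  replace ((D + 1) * (eps / (D + 1)))%R with eps in H1 by (field; lra). lra.
Qed.

Lemma sum_n_psum (c : nat -> C) z n : sum_n (fun k => scal (pow_n z k) (c k)) n = psum c (S n) z.
Proof.
  rewrite sum_n_csum. apply csum_ext. intros k _.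
  assert (E : pow_n z k = z ^ k) by (induction k; simpl; try rewrite IHk; auto).
  rewrite E. change (scal (z ^ k) (c k)) with (z ^ k * c k). ring.
Qed.

Lemma psum_tends (c : nat -> C) z l : is_pseries c z l ->
  forall eps : R, (0 < eps)%R -> exists N, forall n, (N <= n)%nat -> (Cmod (psum c n z - l) < eps)%R.
Proof.
  intros H eps He. unfold is_pseries, is_series in H.
  assert (Hs : (0 < sqrt 2)%R) by (apply sqrt_lt_R0; lra).
  destruct (proj1 (@filterlim_locally nat (NormedModule.UniformSpace C_AbsRing C_NormedModule)
    eventually _ _ l) H (mkposreal (eps / sqrt 2) ltac:(apply Rdiv_lt_0_compat; lra)))
    as [N HN].
  exists (S N). intros [|m] Hm; [lia|].
  specialize (HN m ltac:(lia)). apply C_NormedModule_mixin_compat2 in HN. simpl in HN.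
  rewrite sum_n_psum in HN. replace (sqrt 2 * (eps / sqrt 2))%R with eps in HN by (field; lra).
  exact HN.
Qed.

Lemma is_pseries_of_psum (c : nat -> C) z l :
  (forall eps : R, (0 < eps)%R -> exists N, forall n, (N <= n)%nat -> (Cmod (psum c n z - l) < eps)%R) ->
  is_pseries c z l.
Proof.
  intros H. unfold is_pseries, is_series. apply filterlim_locally. intros eps.
  destruct (H eps (cond_pos eps)) as [N HN]. exists N. intros n Hn.
  apply C_NormedModule_mixin_compat1. rewrite sum_n_psum. apply HN. lia.
Qed.

Lemma pseries_unique (c : nat -> C) z l1 l2 : is_pseries c z l1 -> is_pseries c z l2 -> l1 = l2.
Proof. apply filterlim_locally_unique. Qed.

Lemma terms_bounded (c : nat -> C) z l : is_pseries c z l ->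
  exists B, (0 <= B)%R /\ forall m, (Cmod (c m * z ^ m) <= B)%R.
Proof.
  intros H. destruct (psum_tends c z l H 1%R ltac:(lra)) as [N HN].
  set (Sum := rsum (fun k => Cmod (c k * z ^ k)) N).
  assert (HS : (0 <= Sum)%R) by (apply rsum_nonneg; intros; apply Cmod_ge_0).
  exists (2 + Sum)%R. split; [lra|]. intros m. destruct (Nat.lt_ge_cases m N).
  - assert (Cmod (c m * z ^ m) <= Sum)%R
      by (apply (rsum_ge_term (fun k => Cmod (c k * z ^ k))); auto; intros; apply Cmod_ge_0).
    lra.
  - replace (c m * z ^ m) with ((psum c (S m) z - l) + - (psum c m z - l)) by (rewrite psum_S; ring).
    eapply Rle_trans; [apply Cmod_triangle|]. rewrite Cmod_opp.
    pose proof (HN (S m) ltac:(lia)). pose proof (HN m ltac:(lia)). lra.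
Qed.

Lemma tail_geometric (c : nat -> C) z l B q K : is_pseries c z l -> (0 <= q < 1)%R -> (0 <= B)%R ->
  (forall m, Cmod (c m * z ^ m) <= B * q ^ m)%R ->
  (Cmod (l - psum c K z) <= B * q ^ K / (1 - q))%R.
Proof.
  intros Hc Hq HB Hm.
  assert (Block : forall d, (Cmod (psum c (K + d) z - psum c K z) <= B * q ^ K * (1 - q ^ d) / (1 - q))%R).
  { induction d as [|d IH].
    - rewrite Nat.add_0_r. replace (psum c K z - psum c K z) with (RtoC 0) by ring.
      rewrite Cmod_0. simpl.
      replace (B * q ^ K * (1 - 1) / (1 - q))%R with 0%R by (field; lra). lra.
    - rewrite Nat.add_succ_r, psum_S.
      replace (psum c (K + d) z + c (K + d)%nat * z ^ (K + d) - psum c K z)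
        with ((psum c (K + d) z - psum c K z) + c (K + d)%nat * z ^ (K + d)) by ring.
      eapply Rle_trans; [apply Cmod_triangle|]. specialize (Hm (K + d)%nat).
      rewrite pow_add in Hm. apply Rle_trans with
        (B * q ^ K * (1 - q ^ d) / (1 - q) + B * (q ^ K * q ^ d))%R; [lra|].
      right. simpl. field. lra. }
  apply Rle_plus_epsilon. intros eps Heps.
  destruct (psum_tends c z l Hc eps Heps) as [N HN].
  specialize (HN (K + N)%nat ltac:(lia)). specialize (Block N).
  replace (l - psum c K z) with ((psum c (K + N) z - psum c K z) + - (psum c (K + N) z - l)) by ring.
  eapply Rle_trans; [apply Cmod_triangle|]. rewrite Cmod_opp.
  assert (B * q ^ K * (1 - q ^ N) / (1 - q) <= B * q ^ K / (1 - q))%R.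
  { unfold Rdiv. apply Rmult_le_compat_r; [apply Rlt_le, Rinv_0_lt_compat; lra|].
    assert (0 <= q ^ N)%R by (apply pow_le; lra).
    assert (0 <= B * q ^ K)%R by (apply Rmult_le_pos; auto; apply pow_le; lra). nra. }
  lra.
Qed.

Lemma re_lower_bound_limit (c : nat -> C) z l lam B0 D s : is_pseries c z l ->
  (Cmod lam <= 1)%R -> (0 <= s < 1)%R -> (0 <= D)%R ->
  (forall L, (0 < L)%nat -> B0 - D * s ^ L <= Re (lam * psum c L z))%R -> (B0 <= Re (lam * l))%R.
Proof.
  intros Hc Hl Hs HD H. apply Rle_plus_epsilon. intros eps He.
  destruct (psum_tends c z l Hc (eps / 2)%R ltac:(lra)) as [N1 HN1].
  destruct (pow_small s (eps / (2 * (D + 1))) Hs ltac:(apply Rdiv_lt_0_compat; lra)) as [N2 HN2].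
  set (L := S (N1 + N2)). specialize (H L ltac:(unfold L; lia)).
  specialize (HN1 L ltac:(unfold L; lia)). specialize (HN2 L ltac:(unfold L; lia)).
  assert (0 <= s ^ L)%R by (apply pow_le; lra).
  assert (D * s ^ L <= (D + 1) * (eps / (2 * (D + 1))))%R by (apply Rmult_le_compat; lra).
  replace ((D + 1) * (eps / (2 * (D + 1))))%R with (eps / 2)%R in H1 by (field; lra).
  assert (Re (lam * psum c L z) - Re (lam * l) <= eps / 2)%R.
  { replace (Re (lam * psum c L z) - Re (lam * l))%R with (Re (lam * (psum c L z - l)))
      by (destruct lam, (psum c L z), l; simpl; ring).
    eapply Rle_trans; [eapply Rle_trans; [apply Rle_abs | apply re_le_Cmod]|].
    rewrite Cmod_mult. pose proof (Cmod_ge_0 (psum c L z - l)). nra. }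
  lra.
Qed.

Definition re_nonneg_series (c : nat -> C) : Prop :=
  forall z, (Cmod z < 1)%R -> exists l, is_pseries c z l /\ (0 <= Re l)%R.

Lemma geometric_domination (c : nat -> C) (r' rho : R) l :
  is_pseries c (RtoC r') l -> (0 <= rho < r')%R ->
  exists B q, (0 <= B)%R /\ (0 <= q < 1)%R /\
    forall z m, Cmod z = rho -> (Cmod (c m * z ^ m) <= B * q ^ m)%R.
Proof.
  intros Hl Hr. destruct (terms_bounded c _ l Hl) as [B [HB HBm]].
  exists B, (rho / r')%R. split; [auto|]. split.
  { split; [apply Rdiv_le_0_compat; lra|].
    apply (Rmult_lt_reg_r r'); [lra|]. unfold Rdiv. rewrite Rmult_assoc, Rinv_l; lra. }
  intros z m Hz. specialize (HBm m).
  rewrite Cmod_mult, Cmod_pow, Cmod_R, Rabs_pos_eq in HBm by lra.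
  rewrite Cmod_mult, Cmod_pow, Hz.
  replace rho with (r' * (rho / r'))%R at 1 by (field; lra). rewrite Rpow_mult_distr.
  assert (0 <= (rho / r') ^ m)%R by (apply pow_le, Rdiv_le_0_compat; lra).
  replace (Cmod (c m) * (r' ^ m * (rho / r') ^ m))%R with ((Cmod (c m) * r' ^ m) * (rho / r') ^ m)%R
    by ring.
  apply Rmult_le_compat_r; auto.
Qed.

Lemma Cmod_trig (t : nat -> C) (M : nat) (x : R) : (Cmod (trig t M x) <= rsum (fun k => Cmod (t k)) M)%R.
Proof.
  eapply Rle_trans; [apply Cmod_csum|]. apply rsum_le. intros k _.
  rewrite Cmod_mult, Cmod_cis. lra.
Qed.

(* If P approximates l up to E, with Re l >= 0, and 0 <= Re T, |T| <= S, then
   Re((P + conj P) T) = 2 Re P Re T is at least -2 E S. *)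
Lemma re_sym_product_lower_bound (P l T : C) (E S : R) :
  (0 <= Re l)%R -> (Cmod (l - P) <= E)%R -> (0 <= Re T)%R -> (Cmod T <= S)%R ->
  (- (2 * E * S) <= Re ((P + Cconj P) * T))%R.
Proof.
  intros Hl HP HT HS.
  replace (Re ((P + Cconj P) * T)) with (2 * Re P * Re T)%R by (destruct P, T; simpl; ring).
  assert (A1 := re_le_Cmod (l - P)). assert (A2 := re_le_Cmod T).
  replace (Re (l - P)) with (Re l - Re P)%R in A1 by (destruct l, P; simpl; ring).
  apply Rabs_le_between in A1. apply Rabs_le_between in A2. nra.
Qed.

Definition paired_value (c t : nat -> C) (M : nat) (rho : R) : C :=
  csum (fun k => c k * RtoC (rho ^ k) * t k) M + Cconj (c 0%nat) * t 0%nat.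

Lemma average_sym_psum_trig (c t : nat -> C) (M : nat) (rho : R) (K : nat) : (0 < M)%nat -> (M <= K)%nat ->
  (forall k, (M <= k)%nat -> t k = 0) ->
  csum (fun j => (psum c K (sample rho (2 * K) j) + Cconj (psum c K (sample rho (2 * K) j)))
                   * trig t M (angle (2 * K) j)) (2 * K)
  = RtoC (INR (2 * K)) * paired_value c t M rho.
Proof.
  intros HM HK Ht.
  assert (Htrig : forall x, trig t M x = trig t K x).
  { intros x. symmetry. apply csum_extend; auto. intros k Hk. rewrite Ht by lia. ring. }
  rewrite (csum_ext _ (fun j => psum c K (sample rho (2 * K) j) * trig t K (angle (2 * K) j)
      + Cconj (psum c K (sample rho (2 * K) j)) * trig t K (angle (2 * K) j)))
    by (intros j _; rewrite Htrig; ring).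
  rewrite csum_plus, average_psum_trig, average_conj_psum_trig by lia.
  unfold paired_value.
  rewrite (csum_extend _ M K) by (auto; intros k Hk; rewrite Ht by lia; ring). ring.
Qed.

Lemma positivity_lemma (c t : nat -> C) (M : nat) (rho : R) :
  (0 < M)%nat -> (forall k, (M <= k)%nat -> t k = 0) -> (forall x, 0 <= Re (trig t M x))%R ->
  (0 < rho < 1)%R -> re_nonneg_series c -> (0 <= Re (paired_value c t M rho))%R.
Proof.
  intros HM Ht HT Hr Hc.
  destruct (Hc (RtoC ((1 + rho) / 2))) as [l' [Hl' _]].
  { rewrite Cmod_R, Rabs_pos_eq; lra. }
  destruct (geometric_domination c _ rho l' Hl' ltac:(lra)) as [B [q [HB [Hq Hdom]]]].
  set (S := rsum (fun k => Cmod (t k)) M).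
  assert (HS : (0 <= S)%R) by (apply rsum_nonneg; intros; apply Cmod_ge_0).
  apply (nonneg_of_geometric_lower_bound _ (2 * (B / (1 - q)) * S) q M Hq).
  { apply Rmult_le_pos; auto. apply Rmult_le_pos; [lra | apply Rdiv_le_0_compat; lra]. }
  intros K HK.
  assert (HNr : (0 < INR (2 * K))%R) by (apply lt_0_INR; lia).
  (* Each sample contributes at least -2 E_K S, where E_K = B q^K/(1 - q) bounds
     the tail of p after K terms on the circle |z| = rho. *)
  assert (Hsample : forall j, (j < 2 * K)%nat ->
    (- (2 * (B / (1 - q)) * S * q ^ K) <= Re ((psum c K (sample rho (2 * K) j)
       + Cconj (psum c K (sample rho (2 * K) j))) * trig t M (angle (2 * K) j)))%R).
  { intros j _. destruct (Hc (sample rho (2 * K) j)) as [l [Hl Hlpos]].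
    { rewrite Cmod_sample; lra. }
    assert (Htail := tail_geometric c _ l B q K Hl Hq HB
      (fun m => Hdom _ m (Cmod_sample rho (2 * K) j ltac:(lra)))).
    replace (2 * (B / (1 - q)) * S * q ^ K)%R with (2 * (B * q ^ K / (1 - q)) * S)%R
      by (field; lra).
    apply re_sym_product_lower_bound with (l := l); auto. apply Cmod_trig. }
  assert (Hsum := csum_Re_ge _ (2 * K) _ Hsample).
  rewrite average_sym_psum_trig in Hsum by auto.
  replace (Re (RtoC (INR (2 * K)) * paired_value c t M rho))
    with (INR (2 * K) * Re (paired_value c t M rho))%R in Hsum
    by (destruct (paired_value c t M rho); simpl; ring).
  apply Rmult_le_reg_l in Hsum; [lra | auto].
Qed.

Lemma one_minus_neq_0 (y : C) : (Cmod y < 1)%R -> 1 - y <> 0.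
Proof.
  intros H E. assert (y = 1) by (replace y with (1 - (1 - y)) by ring; rewrite E; ring).
  subst. rewrite Cmod_1 in H. lra.
Qed.

Lemma Cmod_one_minus_ge (y : C) : (1 - Cmod y <= Cmod (1 - y))%R.
Proof.
  assert (H := Cmod_triangle (1 - y) y). replace (1 - y + y) with (RtoC 1) in H by ring.
  rewrite Cmod_1 in H. lra.
Qed.

Lemma herglotz_kernel_re_ge (y : C) : (Cmod y < 1)%R ->
  ((1 - Cmod y) / (1 + Cmod y) <= Re ((1 + y) / (1 - y)))%R.
Proof.
  intros H. assert (Hne := one_minus_neq_0 y H). set (s := Cmod y) in *.
  assert (Hs2 : (s ^ 2 = Re y ^ 2 + Im y ^ 2)%R) by (unfold s; apply Cmod2_alt).
  assert (Hs0 : (0 <= s)%R) by apply Cmod_ge_0.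
  assert (Ha : (Rabs (Re y) <= s)%R) by apply re_le_Cmod. apply Rabs_le_between in Ha.
  destruct y as [a b]. simpl in Hs2, Ha.
  assert (HD : ((1 - a) ^ 2 + b ^ 2 > 0)%R) by nra.
  replace (Re ((1 + (a, b)) / (1 - (a, b)))) with ((1 - a ^ 2 - b ^ 2) / ((1 - a) ^ 2 + b ^ 2))%R
    by (unfold Cdiv, Cmult, Cinv, Cplus, Cminus, Copp; simpl; field; nra).
  cut (0 <= (1 - a ^ 2 - b ^ 2) / ((1 - a) ^ 2 + b ^ 2) - (1 - s) / (1 + s))%R; [lra|].
  assert (Hb : (b ^ 2 = s ^ 2 - a ^ 2)%R) by nra.
  replace ((1 - a ^ 2 - b ^ 2) / ((1 - a) ^ 2 + b ^ 2) - (1 - s) / (1 + s))%R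
    with ((1 - s) * ((1 + s) ^ 2 - ((1 - a) ^ 2 + b ^ 2)) / (((1 - a) ^ 2 + b ^ 2) * (1 + s)))%R
    by (rewrite !Hb; field; split; nra).
  apply Rdiv_le_0_compat; [apply Rmult_le_pos|]; nra.
Qed.

Lemma herglotz_kernel_mod_le (y : C) : (Cmod y < 1)%R ->
  (Cmod ((1 + y) / (1 - y)) <= (1 + Cmod y) / (1 - Cmod y))%R.
Proof.
  intros H. rewrite Cmod_div by (apply one_minus_neq_0; auto).
  assert (A1 := Cmod_one_minus_ge y).
  assert (A2 : (Cmod (1 + y) <= 1 + Cmod y)%R) by (rewrite <- Cmod_1 at 2; apply Cmod_triangle).
  unfold Rdiv. apply Rmult_le_compat; try lra.
  - apply Cmod_ge_0.
  - apply Rlt_le, Rinv_0_lt_compat. pose proof (Cmod_ge_0 y). lra.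
  - apply Rinv_le_contravar; lra.
Qed.

Definition kernel_trunc (y : C) (L : nat) : C := -1 + 2 * csum (fun n => y ^ n) L.

Lemma kernel_trunc_error (y : C) L : (Cmod y < 1)%R ->
  (Cmod ((1 + y) / (1 - y) - kernel_trunc y L) <= 2 / (1 - Cmod y) * Cmod y ^ L)%R.
Proof.
  intros H. assert (Hne := one_minus_neq_0 y H). assert (G := csum_geom y L).
  replace ((1 + y) / (1 - y) - kernel_trunc y L) with (2 * y ^ L / (1 - y)).
  2:{ unfold kernel_trunc. replace (csum (fun n => y ^ n) L) with ((1 - y ^ L) / (1 - y))
        by (rewrite <- G; field; auto).
      field; auto. }
  rewrite Cmod_div, Cmod_mult, Cmod_pow, Cmod_R, Rabs_pos_eq by (auto; lra).
  assert (A := Cmod_one_minus_ge y). assert (0 <= Cmod y ^ L)%R by (apply pow_le, Cmod_ge_0).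
  unfold Rdiv. apply Rle_trans with (2 * Cmod y ^ L * / (1 - Cmod y))%R.
  - apply Rmult_le_compat_l; [nra|]. apply Rinv_le_contravar; lra.
  - right. field. lra.
Qed.

(* Coefficients of the trigonometric polynomial A + lam K_L(x e^{-i theta}),
   where K_L is the truncated Herglotz kernel. *)
Definition kernel_coef (lam x : C) (A : R) (L n : nat) : C :=
  if Nat.ltb n L then 2 * lam * x ^ n + (if Nat.eqb n 0 then RtoC A - lam else 0) else 0.

Lemma csum_delta_0 (v : C) (L : nat) :
  (0 < L)%nat -> csum (fun n => if Nat.eqb n 0 then v else 0) L = v.
Proof.
  intros HL. rewrite (csum_delta (fun _ => v)). destruct (Nat.ltb_spec 0 L); [reflexivity | lia].
Qed.

Lemma trig_kernel_coef (lam x : C) (A : R) (L : nat) (th : R) : (0 < L)%nat ->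
  trig (kernel_coef lam x A L) L th = RtoC A + lam * kernel_trunc (x * cis (- th)) L.
Proof.
  intros HL. unfold trig, kernel_trunc.
  rewrite (csum_ext _ (fun n => 2 * lam * (x * cis (- th)) ^ n
                                + (if Nat.eqb n 0 then RtoC A - lam else 0))).
  - rewrite csum_plus, csum_scal_l, csum_delta_0 by auto.
    change (csum (Cpow (x * cis (- th))) L) with (csum (fun n => (x * cis (- th)) ^ n) L).
    ring.
  - intros n Hn. unfold kernel_coef. destruct (Nat.ltb_spec n L); [|lia].
    rewrite Cpow_mult_l, cis_pow. destruct (Nat.eqb_spec n 0) as [->|].
    + simpl (INR 0). rewrite !Rmult_0_l, Ropp_0, cis_0. ring.
    + replace (INR n * - th)%R with (- (INR n * th))%R by ring. ring.
Qed.

Lemma paired_value_kernel_coef (c : nat -> C) (lam x : C) (A rho : R) (L : nat) :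
  c 0%nat = 1 -> (0 < L)%nat ->
  paired_value c (kernel_coef lam x A L) L rho = 2 * (lam * psum c L (RtoC rho * x)) + RtoC (2 * A).
Proof.
  intros H0 HL. unfold paired_value, psum.
  rewrite (csum_ext _ (fun n => 2 * lam * (c n * (RtoC rho * x) ^ n)
                                + (if Nat.eqb n 0 then RtoC A - lam else 0))).
  - rewrite csum_plus, csum_scal_l, csum_delta_0 by auto.
    unfold kernel_coef. destruct (Nat.ltb_spec 0 L); [|lia]. simpl Nat.eqb. rewrite H0.
    apply injective_projections; simpl; ring.
  - intros n Hn. unfold kernel_coef. destruct (Nat.ltb_spec n L); [|lia].
    rewrite Cpow_mult_l, <- RtoC_pow. destruct (Nat.eqb_spec n 0) as [->|].
    + rewrite H0. simpl. ring.
    + ring.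
Qed.

Lemma psum_lower_bound (c : nat -> C) (rho A : R) (lam x : C) (L : nat) :
  c 0%nat = 1 -> re_nonneg_series c -> (0 < rho < 1)%R -> (0 < L)%nat ->
  (forall th, 0 <= A + Re (lam * kernel_trunc (x * cis (- th)) L))%R ->
  (0 <= A + Re (lam * psum c L (RtoC rho * x)))%R.
Proof.
  intros H0 Hc Hr HL HT.
  assert (Hpos : (0 <= Re (paired_value c (kernel_coef lam x A L) L rho))%R).
  { apply positivity_lemma; [exact HL | | | exact Hr | exact Hc].
    - intros k Hk. unfold kernel_coef. destruct (Nat.ltb_spec k L); [lia | reflexivity].
    - intros th. rewrite trig_kernel_coef by exact HL. apply HT. }
  rewrite paired_value_kernel_coef in Hpos by auto.
  replace (Re (2 * (lam * psum c L (RtoC rho * x)) + RtoC (2 * A)))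
    with (2 * (A + Re (lam * psum c L (RtoC rho * x))))%R in Hpos
    by (destruct (lam * psum c L (RtoC rho * x)); simpl; ring).
  lra.
Qed.

Lemma herglotz_bound (c : nat -> C) (z l lam : C) (rho B0 : R) :
  c 0%nat = 1 -> re_nonneg_series c -> is_pseries c z l -> (Cmod z < rho < 1)%R ->
  (Cmod lam <= 1)%R ->
  (forall y, Cmod y = (Cmod z / rho)%R -> B0 <= Re (lam * ((1 + y) / (1 - y))))%R ->
  (B0 <= Re (lam * l))%R.
Proof.
  intros H0 Hc Hl Hr Hlam HB.
  assert (Hrho : (0 < rho)%R) by (pose proof (Cmod_ge_0 z); lra).
  set (s := (Cmod z / rho)%R).
  assert (Hs : (0 <= s < 1)%R).
  { unfold s. split; [apply Rdiv_le_0_compat; [apply Cmod_ge_0 | lra]|].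
    apply (Rmult_lt_reg_r rho); auto. unfold Rdiv. rewrite Rmult_assoc, Rinv_l; lra. }
  set (x := z * RtoC (/ rho)).
  assert (Hx : Cmod x = s).
  { unfold x, s. rewrite Cmod_mult, Cmod_R, Rabs_pos_eq; [reflexivity|].
    left; apply Rinv_0_lt_compat; auto. }
  assert (Hz : RtoC rho * x = z).
  { unfold x. rewrite Cmult_comm, <- Cmult_assoc, <- RtoC_mult, Rinv_l by lra. ring. }
  apply (re_lower_bound_limit c z l lam B0 (2 / (1 - s)) s Hl Hlam Hs).
  { apply Rdiv_le_0_compat; lra. }
  intros L HL. rewrite <- Hz.
  cut (0 <= (- B0 + 2 / (1 - s) * s ^ L) + Re (lam * psum c L (RtoC rho * x)))%R; [lra|].
  apply psum_lower_bound; auto; [lra|]. intros th.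
  set (y := x * cis (- th)).
  assert (Hy : Cmod y = s) by (unfold y; rewrite Cmod_mult, Cmod_cis, Hx; ring).
  assert (Herr := kernel_trunc_error y L ltac:(lra)). rewrite Hy in Herr.
  assert (Hre := re_le_Cmod (lam * ((1 + y) / (1 - y) - kernel_trunc y L))).
  rewrite Cmod_mult in Hre. apply Rabs_le_between in Hre.
  replace (Re (lam * ((1 + y) / (1 - y) - kernel_trunc y L)))
    with (Re (lam * ((1 + y) / (1 - y))) - Re (lam * kernel_trunc y L))%R in Hre
    by (destruct lam, ((1 + y) / (1 - y)), (kernel_trunc y L); simpl; ring).
  assert (Hb := HB y Hy).
  assert (Cmod lam * Cmod ((1 + y) / (1 - y) - kernel_trunc y L) <= 2 / (1 - s) * s ^ L)%R.
  { apply Rle_trans with (1 * (2 / (1 - s) * s ^ L))%R; [|lra].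
    apply Rmult_le_compat; auto; apply Cmod_ge_0. }
  lra.
Qed.

Lemma align_neg (v : C) : exists e, Cmod e = 1%R /\ e * v = RtoC (- Cmod v).
Proof.
  destruct (Ceq_dec v 0) as [->|Z].
  - exists 1. rewrite Cmod_1, Cmod_0. split; auto. apply injective_projections; simpl; ring.
  - assert (Hm : (0 < Cmod v)%R) by (apply Cmod_gt_0; auto).
    exists (- Cconj v * RtoC (/ Cmod v)). split.
    + rewrite Cmod_mult, Cmod_opp, Cmod_conj, Cmod_R, Rabs_pos_eq; [field; lra|].
      left; apply Rinv_0_lt_compat; auto.
    + replace (- Cconj v * RtoC (/ Cmod v) * v) with (- ((v * Cconj v) * RtoC (/ Cmod v))) by ring.
      rewrite <- Cmod2_conj. apply injective_projections; simpl; field; lra.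
Qed.

Lemma le_of_linear_approx (X Y K d : R) : (0 < d)%R -> (0 <= K)%R ->
  (forall del, 0 < del < d -> X <= Y + K * del)%R -> (X <= Y)%R.
Proof.
  intros Hd HK H. apply Rle_plus_epsilon. intros eps He.
  set (del := Rmin (d / 2) (eps / (K + 1))).
  assert (H1 : (0 < del)%R) by (apply Rmin_glb_lt; [lra | apply Rdiv_lt_0_compat; lra]).
  assert (H2 : (del < d)%R) by (eapply Rle_lt_trans; [apply Rmin_l | lra]).
  assert (H3 : (del <= eps / (K + 1))%R) by apply Rmin_r.
  specialize (H del (conj H1 H2)).
  assert (K * del <= (K + 1) * (eps / (K + 1)))%R by (apply Rmult_le_compat; lra).
  replace ((K + 1) * (eps / (K + 1)))%R with eps in H0 by (field; lra). lra.
Qed.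

Lemma caratheodory_re_ge (c : nat -> C) (z l : C) :
  c 0%nat = 1 -> re_nonneg_series c -> is_pseries c z l -> (Cmod z < 1)%R ->
  ((1 - Cmod z) / (1 + Cmod z) <= Re l)%R.
Proof.
  intros H0 Hc Hl Hz. set (r := Cmod z) in *. assert (Hr : (0 <= r)%R) by apply Cmod_ge_0.
  apply (le_of_linear_approx _ (Re l) 2 (1 - r)); [lra | lra|]. intros del Hd.
  assert (Hrho : ((1 - del - r) / (1 - del + r) <= Re l)%R).
  { replace (Re l) with (Re (1 * l)) by (f_equal; ring).
    apply (herglotz_bound c z l 1 (1 - del)); auto; [fold r; lra | rewrite Cmod_1; lra|].
    intros y Hy. rewrite Cmult_1_l.
    eapply Rle_trans; [|apply herglotz_kernel_re_ge]; fold r in Hy; rewrite Hy.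
    - right. field. lra.
    - apply (Rmult_lt_reg_r (1 - del)); [lra|]. unfold Rdiv. rewrite Rmult_assoc, Rinv_l; lra. }
  assert (Halg : ((1 - r) / (1 + r) - (1 - del - r) / (1 - del + r) <= 2 * del)%R).
  { replace ((1 - r) / (1 + r) - (1 - del - r) / (1 - del + r))%R
      with (2 * r * del / ((1 + r) * (1 - del + r)))%R by (field; lra).
    apply (Rmult_le_reg_r ((1 + r) * (1 - del + r))); [nra|].
    unfold Rdiv. rewrite Rmult_assoc, Rinv_l by nra.
    assert ((1 + r) * (1 - del + r) >= r)%R by nra. nra. }
  lra.
Qed.

Lemma caratheodory_mod_le (c : nat -> C) (z l : C) :
  c 0%nat = 1 -> re_nonneg_series c -> is_pseries c z l -> (Cmod z < 1)%R ->
  (Cmod l <= (1 + Cmod z) / (1 - Cmod z))%R.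
Proof.
  intros H0 Hc Hl Hz. set (r := Cmod z) in *. assert (Hr : (0 <= r)%R) by apply Cmod_ge_0.
  destruct (align_neg l) as [lam [Hlam Hlaml]].
  apply (le_of_linear_approx _ _ (4 / ((1 - r) * (1 - r))) ((1 - r) / 2));
    [lra | apply Rdiv_le_0_compat; nra|]. intros del Hd.
  assert (Hrho : (- ((1 - del + r) / (1 - del - r)) <= Re (lam * l))%R).
  { apply (herglotz_bound c z l lam (1 - del)); auto; [fold r; lra | lra|].
    intros y Hy. fold r in Hy.
    assert (Hys : (Cmod y < 1)%R).
    { rewrite Hy. apply (Rmult_lt_reg_r (1 - del)); [lra|].
      unfold Rdiv. rewrite Rmult_assoc, Rinv_l; lra. }
    assert (HW := herglotz_kernel_mod_le y Hys). rewrite Hy in HW.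
    assert (Hre := re_le_Cmod (lam * ((1 + y) / (1 - y)))). apply Rabs_le_between in Hre.
    rewrite Cmod_mult, Hlam, Rmult_1_l in Hre.
    replace ((1 - del + r) / (1 - del - r))%R with ((1 + r / (1 - del)) / (1 - r / (1 - del)))%R
      by (field; lra).
    lra. }
  rewrite Hlaml in Hrho. simpl in Hrho.
  assert (Halg : (0 <= 4 / ((1 - r) * (1 - r)) * del
                       - ((1 - del + r) / (1 - del - r) - (1 + r) / (1 - r)))%R).
  { replace (4 / ((1 - r) * (1 - r)) * del - ((1 - del + r) / (1 - del - r) - (1 + r) / (1 - r)))%R
      with (2 * del * (2 * (1 - del - r) - r * (1 - r)) / ((1 - r) * (1 - r) * (1 - del - r)))%R
      by (field; lra).
    apply Rdiv_le_0_compat; [|apply Rmult_lt_0_compat; nra].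
    assert (2 * (1 - del - r) >= r * (1 - r))%R by nra. nra. }
  lra.
Qed.

Lemma bernoulli_minus (d : R) (k : nat) : (0 <= d <= 1)%R -> (1 - INR k * d <= (1 - d) ^ k)%R.
Proof.
  intros H. induction k as [|k IH]; [simpl; lra|]. rewrite S_INR. simpl.
  assert (0 <= (1 - d) ^ k)%R by (apply pow_le; lra). pose proof (pos_INR k). nra.
Qed.

(* Positivity for T(x) = 1 + s e^{-ikx}, with s unimodular aligning c_k, gives
   rho^k |c_k| <= 2. *)
Lemma caratheodory_coef_rho (c : nat -> C) (k : nat) (rho : R) :
  c 0%nat = 1 -> re_nonneg_series c -> (0 < k)%nat -> (0 < rho < 1)%R ->
  (Cmod (c k) * rho ^ k <= 2)%R.
Proof.
  intros H0 Hc Hk Hr. destruct (align_neg (c k)) as [s [Hs Hsc]].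
  set (t := fun n => if Nat.eqb n 0 then RtoC 1 else if Nat.eqb n k then s else 0).
  assert (Ht0 : t 0%nat = 1) by reflexivity.
  assert (Htk : t k = s) by (unfold t; destruct (Nat.eqb_spec k 0); [lia | now rewrite Nat.eqb_refl]).
  assert (Htmid : forall n, (1 <= n < k)%nat -> t n = 0).
  { intros n Hn. unfold t. destruct (Nat.eqb_spec n 0); [lia|].
    destruct (Nat.eqb_spec n k); [lia | reflexivity]. }
  assert (Hends : forall f : nat -> C, (forall n, (1 <= n < k)%nat -> f n = 0) ->
            csum f (S k) = f 0%nat + f k).
  { intros f Hf. cbn [csum]. rewrite (csum_extend f 1 k) by (auto; lia). simpl. ring. }
  assert (Hpos : (0 <= Re (paired_value c t (S k) rho))%R).
  { apply positivity_lemma; [lia | | | exact Hr | exact Hc].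
    - intros n Hn. unfold t. destruct (Nat.eqb_spec n 0); [lia|].
      destruct (Nat.eqb_spec n k); [lia | reflexivity].
    - intros x. unfold trig. rewrite Hends by (intros n Hn; rewrite Htmid by auto; ring).
      rewrite Ht0, Htk. simpl (INR 0). rewrite Rmult_0_l, Ropp_0, cis_0.
      assert (Hre := re_le_Cmod (s * cis (- (INR k * x)))).
      rewrite Cmod_mult, Hs, Cmod_cis in Hre. apply Rabs_le_between in Hre.
      change (Re (1 * 1 + s * cis (- (INR k * x))))
        with (Re (1 * 1) + Re (s * cis (- (INR k * x))))%R.
      simpl (Re (1 * 1)). lra. }
  unfold paired_value in Hpos.
  rewrite Hends in Hpos by (intros n Hn; rewrite Htmid by auto; ring).
  rewrite Ht0, Htk, H0 in Hpos.
  replace (1 * RtoC (rho ^ 0) * 1 + c k * RtoC (rho ^ k) * s + Cconj 1 * 1)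
    with (RtoC (2 - Cmod (c k) * rho ^ k)) in Hpos.
  - simpl in Hpos. lra.
  - replace (c k * RtoC (rho ^ k) * s) with (RtoC (rho ^ k) * (s * c k)) by ring.
    rewrite Hsc. apply injective_projections; simpl; ring.
Qed.

Lemma caratheodory_coef (c : nat -> C) (k : nat) :
  c 0%nat = 1 -> re_nonneg_series c -> (0 < k)%nat -> (Cmod (c k) <= 2)%R.
Proof.
  intros H0 Hc Hk. pose proof (Cmod_ge_0 (c k)).
  apply (le_of_linear_approx _ 2 (Cmod (c k) * INR k) 1);
    [lra | apply Rmult_le_pos; [lra | apply pos_INR]|].
  intros del Hd.
  assert (Hrho := caratheodory_coef_rho c k (1 - del) H0 Hc Hk ltac:(lra)).
  assert (Hb := bernoulli_minus del k ltac:(lra)).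
  assert (Cmod (c k) * (1 - INR k * del) <= Cmod (c k) * (1 - del) ^ k)%R
    by (apply Rmult_le_compat_l; lra).
  nra.
Qed.

(* Taylor coefficients of p_eps(z) = (h(z)/z + eps g(z)/z - beta) / (1 - beta). *)
Definition normalized_coef (a b : nat -> C) (beta : R) (eps : C) (k : nat) : C :=
  (a (S k) + eps * b (S k) - (if Nat.eqb k 0 then RtoC beta else 0)) / RtoC (1 - beta).

Lemma RtoC_one_minus_neq_0 (beta : R) : (beta < 1)%R -> RtoC (1 - beta) <> 0.
Proof. intros Hb E. injection E. lra. Qed.

Lemma normalized_coef_0 (a b : nat -> C) (beta : R) (eps : C) :
  a 1%nat = 1 -> b 1%nat = 0 -> (beta < 1)%R -> normalized_coef a b beta eps 0 = 1.
Proof.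
  intros Ha Hb Hbeta. assert (Hne := RtoC_one_minus_neq_0 beta Hbeta).
  unfold normalized_coef. rewrite Ha, Hb. simpl Nat.eqb. rewrite RtoC_minus in *.
  field. auto.
Qed.

Lemma is_pseries_const (v z : C) : is_pseries (fun k => if Nat.eqb k 0 then v else RtoC 0) z v.
Proof.
  apply is_pseries_of_psum. intros eps He. exists 1%nat. intros n Hn.
  replace (psum _ n z) with v.
  - replace (v - v) with (RtoC 0) by ring. rewrite Cmod_0. lra.
  - unfold psum. rewrite (csum_extend _ 1 n); [simpl; ring | lia |].
    intros k Hk. destruct (Nat.eqb_spec k 0); [lia | ring].
Qed.

(* p_eps is given by its Taylor series on the punctured disk: dividing by z shifts
   the coefficients of h and g (h(0) = g(0) = 0), then the series are combined
   linearly. *)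
Lemma normalized_series (a b : nat -> C) (h g : C -> C) (beta : R) (eps z : C) :
  in_H0 a b h g -> (beta < 1)%R -> (Cmod z < 1)%R -> z <> 0 ->
  is_pseries (normalized_coef a b beta eps) z ((h z / z + eps * (g z / z) - beta) / (1 - beta)).
Proof.
  intros [Ha0 [_ [Hb0 [_ Hser]]]] Hbeta Hz Z. destruct (Hser z Hz) as [Hh Hg].
  assert (Hzinv : mult (/ z) z = one) by (change (/ z * z = 1); field; auto).
  assert (Dh := is_pseries_decr_1 a z (/ z) _ Hzinv Hh).
  assert (Dg := is_pseries_scal eps _ z _ ltac:(change (z * eps = eps * z); ring)
                  (is_pseries_decr_1 b z (/ z) _ Hzinv Hg)).
  assert (Dc := is_pseries_const (RtoC beta) z).
  assert (Hsum := is_pseries_scal (/ (1 - beta)) _ z _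
                    ltac:(change (z * / (1 - beta) = / (1 - beta) * z); ring)
                    (is_pseries_minus _ _ _ _ _ (is_pseries_plus _ _ _ _ _ Dh Dg) Dc)).
  assert (Hne := RtoC_one_minus_neq_0 beta Hbeta). rewrite RtoC_minus in Hne.
  change (is_pseries (PS_scal (/ (1 - beta))
      (PS_minus (PS_plus (PS_decr_1 a) (PS_scal eps (PS_decr_1 b)))
                (fun k => if Nat.eqb k 0 then RtoC beta else RtoC 0))) z
    (/ (1 - beta) * ((/ z * (h z + - a 0%nat) + eps * (/ z * (g z + - b 0%nat))) + - beta)))
    in Hsum.
  rewrite Ha0, Hb0 in Hsum.
  replace ((h z / z + eps * (g z / z) - beta) / (1 - beta))
    with (/ (1 - beta) * ((/ z * (h z + - 0) + eps * (/ z * (g z + - 0))) + - beta))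
    by (field; auto).
  eapply is_pseries_ext; [|exact Hsum]. intros k.
  unfold normalized_coef, PS_scal, PS_minus, PS_plus, PS_decr_1.
  change (/ (1 - beta) * (a (S k) + eps * b (S k) + - (if Nat.eqb k 0 then RtoC beta else 0))
          = (a (S k) + eps * b (S k) - (if Nat.eqb k 0 then RtoC beta else 0)) / RtoC (1 - beta)).
  rewrite RtoC_minus. field. auto.
Qed.

(* For |eps| = 1, p_eps has positive real part: Re(eps g/z) >= -|g/z|. *)
Lemma normalized_re_nonneg (a b : nat -> C) (h g : C -> C) (beta : R) (eps : C) :
  in_G0H beta a b h g -> (0 <= beta < 1)%R -> Cmod eps = 1%R ->
  re_nonneg_series (normalized_coef a b beta eps).
Proof.
  intros [HH0 [_ Hcls]] Hbeta Heps z Hz. pose proof HH0 as [_ [Ha1 [_ [Hb1 _]]]].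
  destruct (Ceq_dec z 0) as [->|Z].
  - exists (RtoC 1). split; [|simpl; lra].
    rewrite <- (normalized_coef_0 a b beta eps) by (auto; lra).
    exact (is_pseries_0 (V := C_NormedModule) (normalized_coef a b beta eps)).
  - eexists. split; [apply normalized_series; [exact HH0 | lra | exact Hz | exact Z]|].
    assert (Hne := RtoC_one_minus_neq_0 beta ltac:(lra)).
    replace ((h z / z + eps * (g z / z) - beta) / (1 - beta))
      with ((h z / z + eps * (g z / z) - beta) * RtoC (/ (1 - beta)))
      by (rewrite RtoC_inv, RtoC_minus by lra; rewrite RtoC_minus in Hne; field; auto).
    replace (Re ((h z / z + eps * (g z / z) - beta) * RtoC (/ (1 - beta))))
      with ((Re (h z / z) + Re (eps * (g z / z)) - beta) * / (1 - beta))%R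
      by (destruct (h z / z), (eps * (g z / z)); simpl; ring).
    apply Rmult_le_pos; [|apply Rlt_le, Rinv_0_lt_compat; lra].
    assert (Hre := re_le_Cmod (eps * (g z / z))). apply Rabs_le_between in Hre.
    rewrite Cmod_mult, Heps, Rmult_1_l in Hre.
    specialize (Hcls z Hz Z). lra.
Qed.

Lemma align_sum (u v : C) : exists e, Cmod e = 1%R /\ Cmod (u + e * v) = (Cmod u + Cmod v)%R.
Proof.
  destruct (align_neg u) as [eu [Heu Hu]]. destruct (align_neg v) as [ev [Hev Hv]].
  exists (Cconj eu * ev). split; [rewrite Cmod_mult, Cmod_conj, Heu, Hev; ring|].
  assert (Hunit : Cconj eu * eu = 1).
  { rewrite Cmult_comm, <- Cmod2_conj, Heu. apply injective_projections; simpl; ring. }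
  replace (u + Cconj eu * ev * v) with (- Cconj eu * (- (eu * u) - ev * v))
    by (transitivity (u * (Cconj eu * eu) + Cconj eu * (ev * v)); [|rewrite Hunit]; ring).
  rewrite Hu, Hv, Cmod_mult, Cmod_opp, Cmod_conj, Heu, Rmult_1_l.
  replace (- RtoC (- Cmod u) - RtoC (- Cmod v)) with (RtoC (Cmod u + Cmod v))
    by (apply injective_projections; simpl; ring).
  rewrite Cmod_R, Rabs_pos_eq; [reflexivity|].
  pose proof (Cmod_ge_0 u). pose proof (Cmod_ge_0 v). lra.
Qed.

Lemma Re_normalized (w : C) (beta : R) : (beta < 1)%R ->
  Re ((w - beta) / (1 - beta)) = ((Re w - beta) / (1 - beta))%R.
Proof.
  intros Hb. assert (Hne := RtoC_one_minus_neq_0 beta Hb).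
  replace ((w - beta) / (1 - beta)) with ((w - beta) * RtoC (/ (1 - beta))).
  - destruct w; simpl. unfold Rdiv. ring.
  - rewrite RtoC_inv, RtoC_minus in * by lra. field. auto.
Qed.

Lemma Cmod_normalized (w : C) (beta : R) : (beta < 1)%R ->
  Cmod ((w - beta) / (1 - beta)) = (Cmod (w - beta) / (1 - beta))%R.
Proof.
  intros Hb. assert (Hne := RtoC_one_minus_neq_0 beta Hb).
  rewrite <- RtoC_minus, Cmod_div by auto. rewrite Cmod_R, Rabs_pos_eq by lra. reflexivity.
Qed.

Lemma coefficient_bound (beta : R) (a b : nat -> C) (h g : C -> C) :
  (0 <= beta < 1)%R -> in_G0H beta a b h g ->
  forall n, (2 <= n)%nat -> (Cmod (a n) + Cmod (b n) <= 2 * (1 - beta))%R.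
Proof.
  intros Hb HG n Hn. pose proof HG as [[_ [Ha1 [_ [Hb1 _]]]] _].
  destruct (align_sum (a n) (b n)) as [e [He Hsum]].
  assert (K := caratheodory_coef (normalized_coef a b beta e) (n - 1)
                 (normalized_coef_0 a b beta e Ha1 Hb1 ltac:(lra))
                 (normalized_re_nonneg a b h g beta e HG Hb He) ltac:(lia)).
  unfold normalized_coef in K. replace (S (n - 1)) with n in K by lia.
  destruct (Nat.eqb_spec (n - 1) 0); [lia|].
  rewrite Cmod_div, Cmod_R, Rabs_pos_eq in K by (try apply RtoC_one_minus_neq_0; lra).
  replace (a n + e * b n - 0) with (a n + e * b n) in K by ring. rewrite Hsum in K.
  apply (Rmult_le_compat_r (1 - beta)) in K; [|lra].
  unfold Rdiv in K. rewrite Rmult_assoc, Rinv_l, Rmult_1_r in K by lra. lra.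
Qed.

Lemma harm_mod_bounds (h g : C -> C) (z : C) :
  (Cmod (h z) - Cmod (g z) <= Cmod (harm h g z) <= Cmod (h z) + Cmod (g z))%R.
Proof.
  unfold harm. split.
  - assert (T := Cmod_triangle (h z + Cconj (g z)) (- Cconj (g z))).
    replace (h z + Cconj (g z) + - Cconj (g z)) with (h z) in T by ring.
    rewrite Cmod_opp, Cmod_conj in T. lra.
  - eapply Rle_trans; [apply Cmod_triangle|]. rewrite Cmod_conj. lra.
Qed.

(* At z = 0 both growth bounds read 0 <= |f(0)| = 0 <= 0. *)
Lemma harm_at_0 (a b : nat -> C) (h g : C -> C) : in_H0 a b h g -> harm h g 0 = 0.
Proof.
  intros [Ha0 [_ [Hb0 [_ Hser]]]].
  destruct (Hser 0 ltac:(unfold in_disk; rewrite Cmod_0; lra)) as [Hh Hg].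
  assert (Eh := pseries_unique a (RtoC 0) _ _ Hh (is_pseries_0 (V := C_NormedModule) a)).
  assert (Eg := pseries_unique b (RtoC 0) _ _ Hg (is_pseries_0 (V := C_NormedModule) b)).
  unfold harm. rewrite Eh, Eg, Ha0, Hb0. apply injective_projections; simpl; ring.
Qed.

(* Lower growth bound, from Re p_eps >= (1-r)/(1+r) with eps g/z = -|g/z|. *)
Lemma growth_lower (beta : R) (a b : nat -> C) (h g : C -> C) (z : C) :
  (0 <= beta < 1)%R -> in_G0H beta a b h g -> (Cmod z < 1)%R -> z <> 0 ->
  (beta * Cmod z + (1 - beta) * ((1 - Cmod z) / (1 + Cmod z)) * Cmod z <= Cmod (harm h g z))%R.
Proof.
  intros Hb HG Hz Z. pose proof HG as [HH0 [_ _]]. pose proof HH0 as [_ [Ha1 [_ [Hb1 _]]]].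
  set (r := Cmod z). assert (Hr : (0 < r)%R) by (apply Cmod_gt_0; auto).
  destruct (align_neg (g z / z)) as [e [He Hev]].
  assert (K := caratheodory_re_ge _ z _ (normalized_coef_0 a b beta e Ha1 Hb1 ltac:(lra))
                 (normalized_re_nonneg a b h g beta e HG Hb He)
                 (normalized_series a b h g beta e z HH0 ltac:(lra) Hz Z) Hz).
  rewrite Hev, Re_normalized in K by lra. fold r in K.
  replace (Re (h z / z + RtoC (- Cmod (g z / z)))) with (Re (h z / z) - Cmod (g z / z))%R in K
    by (destruct (h z / z); simpl; ring).
  assert (K2 : (beta + (1 - beta) * ((1 - r) / (1 + r)) <= Re (h z / z) - Cmod (g z / z))%R).
  { apply (Rmult_le_compat_r (1 - beta)) in K; [|lra].
    unfold Rdiv at 2 in K. rewrite Rmult_assoc, Rinv_l, Rmult_1_r in K by lra. lra. }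
  assert (Hu := re_le_Cmod (h z / z)). apply Rabs_le_between in Hu.
  assert (K3 : (beta + (1 - beta) * ((1 - r) / (1 + r)) <= Cmod (h z / z) - Cmod (g z / z))%R)
    by lra.
  rewrite !Cmod_div in K3 by auto. fold r in K3.
  assert (Hharm := harm_mod_bounds h g z).
  assert (Hdiff : ((Cmod (h z) / r - Cmod (g z) / r) * r = Cmod (h z) - Cmod (g z))%R)
    by (field; lra).
  apply (Rmult_le_compat_r r) in K3; lra.
Qed.

(* Upper growth bound, from |p_eps| <= (1+r)/(1-r) with eps g/z aligned with h/z. *)
Lemma growth_upper (beta : R) (a b : nat -> C) (h g : C -> C) (z : C) :
  (0 <= beta < 1)%R -> in_G0H beta a b h g -> (Cmod z < 1)%R -> z <> 0 ->
  (Cmod (harm h g z) <= beta * Cmod z + (1 - beta) * ((1 + Cmod z) / (1 - Cmod z)) * Cmod z)%R.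
Proof.
  intros Hb HG Hz Z. pose proof HG as [HH0 [_ _]]. pose proof HH0 as [_ [Ha1 [_ [Hb1 _]]]].
  set (r := Cmod z). assert (Hr : (0 < r)%R) by (apply Cmod_gt_0; auto).
  destruct (align_sum (h z / z) (g z / z)) as [e [He Hsum]].
  assert (K := caratheodory_mod_le _ z _ (normalized_coef_0 a b beta e Ha1 Hb1 ltac:(lra))
                 (normalized_re_nonneg a b h g beta e HG Hb He)
                 (normalized_series a b h g beta e z HH0 ltac:(lra) Hz Z) Hz).
  rewrite Cmod_normalized in K by lra. fold r in K.
  assert (K2 : (Cmod (h z / z + e * (g z / z)) <= beta + (1 - beta) * ((1 + r) / (1 - r)))%R).
  { assert (T := Cmod_triangle (h z / z + e * (g z / z) - beta) (RtoC beta)).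
    replace (h z / z + e * (g z / z) - beta + beta) with (h z / z + e * (g z / z)) in T by ring.
    rewrite Cmod_R, Rabs_pos_eq in T by lra.
    apply (Rmult_le_compat_r (1 - beta)) in K; [|lra].
    unfold Rdiv at 1 in K. rewrite Rmult_assoc, Rinv_l, Rmult_1_r in K by lra. lra. }
  rewrite Hsum, !Cmod_div in K2 by auto. fold r in K2.
  assert (Hharm := harm_mod_bounds h g z).
  assert (Hsum' : ((Cmod (h z) / r + Cmod (g z) / r) * r = Cmod (h z) + Cmod (g z))%R)
    by (field; lra).
  apply (Rmult_le_compat_r r) in K2; lra.
Qed.

Lemma extremal_psum_error (beta : R) (z : C) (n : nat) : z <> 1 ->
  (psum (ext_a beta) (S (S n)) z - ext_h beta z) * (1 - z) = - RtoC (2 * (1 - beta)) * z ^ S (S n).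
Proof.
  intros Z. assert (Zq : 1 - z <> 0) by (apply Cminus_eq_contra; auto).
  induction n as [|n IH].
  - unfold psum, ext_h; simpl. field. auto.
  - rewrite psum_S. change (ext_a beta (S (S n))) with (RtoC (2 * (1 - beta))).
    transitivity ((psum (ext_a beta) (S (S n)) z - ext_h beta z) * (1 - z)
                  + RtoC (2 * (1 - beta)) * z ^ S (S n) * (1 - z)); [ring|].
    rewrite IH, (Cpow_S z (S (S n))). ring.
Qed.

Lemma extremal_series (beta : R) (z : C) : (0 <= beta < 1)%R -> (Cmod z < 1)%R ->
  is_pseries (ext_a beta) z (ext_h beta z).
Proof.
  intros Hb Hz. apply is_pseries_of_psum. intros eps He.
  assert (Z : z <> 1) by (intros ->; rewrite Cmod_1 in Hz; lra).
  assert (Hm := Cmod_one_minus_ge z). pose proof (Cmod_ge_0 z).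
  set (D := (2 * (1 - beta) / (1 - Cmod z))%R).
  assert (HD : (0 <= D)%R) by (apply Rdiv_le_0_compat; lra).
  destruct (pow_small (Cmod z) (eps / (D + 1)) ltac:(lra) ltac:(apply Rdiv_lt_0_compat; lra))
    as [N HN].
  exists (S (S N)). intros [|[|m]] Hn; try lia. specialize (HN (S (S m)) ltac:(lia)).
  assert (Herr : (Cmod (psum (ext_a beta) (S (S m)) z - ext_h beta z) <= D * Cmod z ^ S (S m))%R).
  { assert (E := f_equal Cmod (extremal_psum_error beta z m Z)).
    rewrite Cmod_mult, Cmod_mult, Cmod_opp, Cmod_R, Cmod_pow, Rabs_pos_eq in E by lra.
    assert (Hpos : (0 < Cmod (1 - z))%R) by lra.
    apply (Rmult_le_reg_r (1 - Cmod z)); [lra|].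
    apply Rle_trans with (Cmod (psum (ext_a beta) (S (S m)) z - ext_h beta z) * Cmod (1 - z))%R.
    - apply Rmult_le_compat_l; [apply Cmod_ge_0 | lra].
    - rewrite E. unfold D. right. field. lra. }
  assert (D * Cmod z ^ S (S m) <= D * (eps / (D + 1)))%R by (apply Rmult_le_compat_l; lra).
  assert (D * (eps / (D + 1)) < eps)%R.
  { apply (Rmult_lt_reg_r (D + 1)); [lra|].
    replace (D * (eps / (D + 1)) * (D + 1))%R with (D * eps)%R by (field; lra). nra. }
  lra.
Qed.

Lemma extremal_in_class (beta : R) : (0 <= beta < 1)%R ->
  in_G0H beta (ext_a beta) ext_b (ext_h beta) ext_g.
Proof.
  intros Hb. split; [|split].
  - do 4 (split; [reflexivity|]). intros z Hz. split.
    + apply extremal_series; auto.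
    + apply is_pseries_of_psum. intros eps He. exists 0%nat. intros n _.
      unfold psum, ext_g. rewrite csum_zero by (intros; unfold ext_b; ring).
      replace (0 - 0) with (RtoC 0) by ring. rewrite Cmod_0. lra.
  - simpl. unfold ext_b. rewrite Cmod_0. lra.
  - intros z Hz Z. unfold in_disk in Hz. unfold ext_g.
    replace (0 / z) with (RtoC 0) by (field; auto). rewrite Cmod_0.
    assert (Zq := one_minus_neq_0 z Hz).
    replace (ext_h beta z / z) with (RtoC beta + RtoC (1 - beta) * ((1 + z) / (1 - z)))
      by (unfold ext_h; rewrite !RtoC_minus, RtoC_mult, RtoC_minus; field; auto).
    replace (Re (RtoC beta + RtoC (1 - beta) * ((1 + z) / (1 - z))))
      with (beta + (1 - beta) * Re ((1 + z) / (1 - z)))%R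
      by (destruct ((1 + z) / (1 - z)); simpl; ring).
    assert (W := herglotz_kernel_re_ge z Hz). pose proof (Cmod_ge_0 z).
    assert (0 < (1 - Cmod z) / (1 + Cmod z))%R by (apply Rdiv_lt_0_compat; lra). nra.
Qed.

Lemma extremal_at_r (beta r : R) : (0 <= beta < 1)%R -> (0 <= r < 1)%R ->
  Cmod (harm (ext_h beta) ext_g (RtoC r)) = (beta * r + (1 - beta) * ((1 + r) / (1 - r)) * r)%R.
Proof.
  intros Hb Hr.
  replace (harm (ext_h beta) ext_g (RtoC r))
    with (RtoC (beta * r + (1 - beta) * ((1 + r) / (1 - r)) * r))
    by (unfold harm, ext_h, ext_g; apply injective_projections; simpl; field; lra).
  rewrite Cmod_R, Rabs_pos_eq; [reflexivity|].
  assert (0 <= (1 + r) / (1 - r))%R by (apply Rdiv_le_0_compat; lra).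
  apply Rplus_le_le_0_compat; [|apply Rmult_le_pos; [apply Rmult_le_pos|]]; nra.
Qed.

Lemma extremal_at_minus_r (beta r : R) : (0 <= beta < 1)%R -> (0 <= r < 1)%R ->
  Cmod (harm (ext_h beta) ext_g (RtoC (- r))) = (beta * r + (1 - beta) * ((1 - r) / (1 + r)) * r)%R.
Proof.
  intros Hb Hr.
  replace (harm (ext_h beta) ext_g (RtoC (- r)))
    with (RtoC (- (beta * r + (1 - beta) * ((1 - r) / (1 + r)) * r)))
    by (unfold harm, ext_h, ext_g; apply injective_projections; simpl; field; lra).
  rewrite Cmod_R, Rabs_Ropp, Rabs_pos_eq; [reflexivity|].
  assert (0 <= (1 - r) / (1 + r))%R by (apply Rdiv_le_0_compat; lra).
  apply Rplus_le_le_0_compat; [|apply Rmult_le_pos; [apply Rmult_le_pos|]]; nra.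
Qed.

Close Scope C_scope.

Theorem mainTheorem3 :
  forall beta : R, (0 <= beta < 1)%R ->
  (forall (a b : nat -> C) (h g : C -> C),
     in_G0H beta a b h g ->
     (forall n : nat, (2 <= n)%nat -> (Cmod (a n) + Cmod (b n) <= 2 * (1 - beta))%R) /\
     (forall z : C, in_disk z ->
        (beta * Cmod z + (1 - beta) * ((1 - Cmod z) / (1 + Cmod z)) * Cmod z
           <= Cmod (harm h g z))%R /\
        (Cmod (harm h g z)
           <= beta * Cmod z + (1 - beta) * ((1 + Cmod z) / (1 - Cmod z)) * Cmod z)%R)) /\
  in_G0H beta (ext_a beta) ext_b (ext_h beta) ext_g /\
  (forall r : R, (0 <= r < 1)%R ->
     Cmod (harm (ext_h beta) ext_g (RtoC r))
       = (beta * r + (1 - beta) * ((1 + r) / (1 - r)) * r)%R /\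
     Cmod (harm (ext_h beta) ext_g (RtoC (- r)))
       = (beta * r + (1 - beta) * ((1 - r) / (1 + r)) * r)%R).
Proof.
  intros beta Hb. split; [|split].
  - intros a b h g HG. split; [exact (coefficient_bound beta a b h g Hb HG)|].
    intros z Hz. destruct (Ceq_dec z 0) as [->|Z].
    + rewrite (harm_at_0 a b h g (proj1 HG)), Cmod_0. lra.
    + split; [apply (growth_lower beta a b) | apply (growth_upper beta a b)]; auto.
  - now apply extremal_in_class.
  - intros r Hr. split; [apply extremal_at_r | apply extremal_at_minus_r]; auto.
Qed.
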